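(* Let $V$ be a $(2n+1)$-dimensional complex vector space, $U\subset V$ a hyperplane, $V_\bullet$ a full flag in $V$, and $\omega$ a skew-symmetric bilinear form on $V$ whose restriction to $U$ is nondegenerate. Then there is a basis $\{e_1,\dots,e_{2n+1}\}$ of $V$ such that $e_1,\dots,e_{2n}\in U$, $e_{2n+1}$ spans $\ker(\omega)=\{v:\omega(v,\cdot)\equiv0\}$, the basis $\{e_1,\dots,e_{2n+1}\}$ is hyperbolic with respect to $\omega$, and each subspace $V_i$ of the flag is spanned by some vectors chosen among $e_1,\dots,e_{2n+1}$ and $e_1+e_{2n+1},\dots,e_{2n}+e_{2n+1}$ (i.e. there are vectors $v_1,\dots,v_{2n+1}$, each of the form $e_k$ or $e_k+e_{2n+1}$ with $k\le 2n$, or $e_{2n+1}$, with $V_i=\langle v_1,\dots,v_i\rangle$ for all $i$).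
   Context: A full flag $V_\bullet$ in $V$ is a chain of subspaces $0\subset V_1\subset\dots\subset V_{2n+1}=V$ with $\dim V_i=i$. A basis $\{e_1,\dots,e_N\}$ is hyperbolic with respect to a skew-symmetric form $\omega$ if for every $i$ either $\omega(e_i,\cdot)\equiv 0$, or there is exactly one index $j$ with $\omega(e_i,e_j)\neq 0$, and for that $j$ one has $\omega(e_i,e_j)=\pm1$. *)

(* Vectors of V = F^N are row vectors 'rV[F]_N; subspaces are
   represented by row spaces of matrices (mxalgebra, scope %MS). *)
From HB Require Import structures.
From mathcomp Require Import all_boot all_order all_algebra.
Set Implicit Arguments. Unset Strict Implicit. Unset Printing Implicit Defensive.
Import Order.TTheory GRing.Theory Num.Theory.
Local Open Scope ring_scope.

Section Defs.
Variables (F : fieldType) (N : nat).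

Definition bform (M : 'M[F]_N) (u v : 'rV[F]_N) : F := (u *m M *m v^T) 0 0.

Definition skew_form (M : 'M[F]_N) : Prop :=
  forall u v : 'rV[F]_N, bform M u v = - bform M v u.

Definition form_ker (M : 'M[F]_N) (v : 'rV[F]_N) : Prop :=
  forall w : 'rV[F]_N, bform M v w = 0.

Definition nondeg_on (M : 'M[F]_N) (m : nat) (U : 'M[F]_(m, N)) : Prop :=
  forall u : 'rV[F]_N, (u <= U)%MS ->
    (forall w : 'rV[F]_N, (w <= U)%MS -> bform M u w = 0) -> u = 0.

Definition hyperplane (m : nat) (U : 'M[F]_(m, N)) : Prop :=
  \rank U = N.-1.

(* full flag: V_1 ⊂ ... ⊂ V_N, V_(i+1) is given by Vf i, of dimension i+1 *)
Definition full_flag (Vf : 'I_N -> 'M[F]_N) : Prop :=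
  (forall i : 'I_N, \rank (Vf i) = i.+1) /\
  (forall i j : 'I_N, (i <= j)%N -> (Vf i <= Vf j)%MS).

Definition is_basis (e : 'I_N -> 'rV[F]_N) : Prop :=
  row_free (\matrix_(i < N) e i).

Definition hyperbolic (M : 'M[F]_N) (e : 'I_N -> 'rV[F]_N) : Prop :=
  forall i : 'I_N,
    (forall w : 'rV[F]_N, bform M (e i) w = 0) \/
    (exists j : 'I_N,
        (forall k : 'I_N, bform M (e i) (e k) != 0 <-> k = j) /\
        (bform M (e i) (e j) = 1 \/ bform M (e i) (e j) = -1)).

Definition span_upto (v : 'I_N -> 'rV[F]_N) (i : 'I_N) : 'M[F]_N :=
  (\sum_(j < N | (j <= i)%N) <<v j>>)%MS.

End Defs.

From HB Require Import structures.
From mathcomp Require Import all_boot all_order all_algebra.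
From mathcomp Require Import ring zify.
Import Order.TTheory GRing.Theory Num.Theory.
Set Implicit Arguments. Unset Strict Implicit. Unset Printing Implicit Defensive.
Local Open Scope ring_scope.

(* Since dim V = 2n+1 is odd and omega is skew, det omega = 0, so omega has a
   nonzero kernel vector k0 ('kernel_vector'); nondegeneracy on the
   hyperplane U forces V = U (+) <k0> and ker omega = <k0>.

   The heart of the proof is a symplectic Gram-Schmidt process adapted to a
   chain C_0 <= C_1 <= ... of subspaces of S + <k0> exhausting S, where omega
   is nondegenerate on S ('adapted_pairs').  Let x be a vector of the first
   C_a not contained in <k0>, and y a vector of the first C_b not orthogonal
   to x ('chain_escape').  After rescaling ('normalize_pair') x and y become
   e or e + k0 and f or f + k0 with omega(e, f) = 1 ('pick_pair'), and every
   C_i is spanned by its trace on S' + <k0>, S' = S /\ {e, f}^perp, together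
   with those of x, y it contains ('span_step').  Since S' has dimension
   dim S - 2 and omega is nondegenerate on it ('rank_peel', 'nondeg_peel'),
   recursing on S' produces orthogonal hyperbolic pairs such that every C_i
   is spanned by the vectors of the finite set
   B = {k0} u {e_j, f_j} u {e_j + k0, f_j + k0} that it contains.

   Applied to S = U and the flag, the pairs followed by k0 form a basis with
   the standard Gram matrix ('gram'), hence a hyperbolic one; and a full flag
   each member of which is spanned by vectors of B is of the form
   <v_1, ..., v_i> with all v_i in B ('flag_from_spanned'). *)

Section Spans.
Variables (F : fieldType) (N : nat).
Implicit Types (A S : 'M[F]_N) (x k : 'rV[F]_N) (L : seq 'rV[F]_N).

Definition ssum L A : 'M[F]_N := (\sum_(x <- L | (x <= A)%MS) <<x>>)%MS.

Definition spanned L A : Prop := (A <= ssum L A)%MS.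

Lemma ssum_sub L A m (X : 'M[F]_(m, N)) :
  (forall x, x \in L -> (x <= A)%MS -> (x <= X)%MS) -> (ssum L A <= X)%MS.
Proof.
elim: L => [|y L IHL] LX; rewrite /ssum ?big_nil ?sub0mx // big_cons.
have LX' : (ssum L A <= X)%MS.
  by apply: IHL => x xL; apply: LX; rewrite inE xL orbT.
by case: ifP => // yA; rewrite addsmx_sub genmxE LX ?mem_head.
Qed.

Lemma ssum_sup L A x : x \in L -> (x <= A)%MS -> (x <= ssum L A)%MS.
Proof.
move=> xL xA; rewrite /ssum (big_rem x) //= xA.
by apply: submx_trans (addsmxSl _ _); rewrite genmxE.
Qed.

Lemma ssum_mono L1 L2 A1 A2 : {subset L1 <= L2} -> (A1 <= A2)%MS ->
  (ssum L1 A1 <= ssum L2 A2)%MS.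
Proof.
move=> sL sA; apply: ssum_sub => x xL xA; apply: ssum_sup; first exact: sL.
exact: submx_trans sA.
Qed.

Lemma scale_ssum L A c x : x \in L -> (c = 0 \/ (x <= A)%MS) ->
  (c *: x <= A :&: ssum L A)%MS.
Proof.
move=> xL [->|xA]; first by rewrite scale0r sub0mx.
by rewrite sub_capmx !scalemx_sub // ssum_sup.
Qed.

Lemma rank_add_notin m (A : 'M[F]_(m, N)) x :
  ~~ (x <= A)%MS -> (\rank A < \rank (A + x)%MS)%N.
Proof.
move=> xA; rewrite rank_ltmx // ltmxE addsmxSl /=.
by apply: contra xA; apply: submx_trans; apply: addsmxSr.
Qed.

Lemma sub_rank_eq m1 m2 (A : 'M[F]_(m1, N)) (B : 'M[F]_(m2, N)) :
  (A <= B)%MS -> (\rank B <= \rank A)%N -> (B <= A)%MS.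
Proof. by move=> sAB h; rewrite -(mxrank_leqif_sup sAB).2 eqn_leq mxrankS. Qed.

Lemma sub_adds_line S k w : (w <= S + k)%MS ->
  exists s t, (s <= S)%MS /\ w = s + t *: k.
Proof.
case/sub_addsmxP => [[u1 u2]] /= ->; exists (u1 *m S), (u2 0 0); split.
  exact: submxMl.
by rewrite {1}(mx11_scalar u2) mul_scalar_mx.
Qed.

Definition chain (C : nat -> 'M[F]_N) : Prop :=
  forall i j, (i <= j)%N -> (C i <= C j)%MS.

Lemma chain_escape (C : nat -> 'M[F]_N) m (X : 'M[F]_(m, N)) : chain C ->
  (exists i0, ~~ (C i0 <= X)%MS) ->
  exists a (z : 'rV[F]_N),
    [/\ ~~ (z <= X)%MS, forall i, (a <= i)%N -> (z <= C i)%MS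
       & forall i, (i < a)%N -> (C i <= X)%MS].
Proof.
move=> chC exC; case: (ex_minnP exC) => a CaX amin.
case/row_subPn: CaX => r zX; exists a, (row r (C a)); split=> // i.
  by move=> ai; apply: submx_trans (row_sub r _) (chC _ _ ai).
by move=> ia; apply/negPn/negP => /amin; rewrite leqNgt ia.
Qed.

Lemma basis_of_spanning (e : 'I_N -> 'rV[F]_N) L A :
  {in L, forall x, (x <= \matrix_i e i)%MS} -> spanned L A -> \rank A = N ->
  is_basis e.
Proof.
move=> Le spA rA; rewrite /is_basis /row_free eqn_leq rank_leq_row /= -{1}rA.
by apply/mxrankS/(submx_trans spA)/ssum_sub => x xL _; apply: Le.
Qed.

End Spans.

Section Flags.
Variables (F : fieldType) (m : nat) (Vf : 'I_m.+1 -> 'M[F]_m.+1).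
Hypothesis flagV : full_flag Vf.

Definition flag_prev (i : 'I_m.+1) : 'M[F]_m.+1 :=
  if val i is j.+1 then Vf (inord j) else 0.

Lemma flag_prev_rank i : \rank (flag_prev i) = i.
Proof.
case: i => [[|j] lt_j] /=; rewrite /flag_prev /=; first by rewrite mxrank0.
by rewrite flagV.1 inordK // ltnW.
Qed.

Lemma flag_prev_sub i : (flag_prev i <= Vf i)%MS.
Proof.
case: i => [[|j] lt_j]; rewrite /flag_prev /= ?sub0mx //.
by apply: flagV.2; rewrite inordK /=; lia.
Qed.

Lemma flag_step i (x : 'rV[F]_m.+1) :
  (x <= Vf i)%MS -> ~~ (x <= flag_prev i)%MS -> (Vf i <= flag_prev i + x)%MS.
Proof.
move=> xV xP; apply: sub_rank_eq; first by rewrite addsmx_sub flag_prev_sub.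
by rewrite flagV.1; have := rank_add_notin xP; rewrite flag_prev_rank.
Qed.

Lemma span_upto_mono (v : 'I_m.+1 -> 'rV[F]_m.+1) (i j : 'I_m.+1) :
  (j <= i)%N -> (span_upto v j <= span_upto v i)%MS.
Proof.
move=> ji; apply/sumsmx_subP => k kj; apply: (sumsmx_sup k) => //.
exact: leq_trans kj ji.
Qed.

Lemma flag_from_spanned (L : seq 'rV[F]_m.+1) :
  (forall i, spanned L (Vf i)) ->
  exists v : 'I_m.+1 -> 'rV[F]_m.+1,
    (forall i, v i \in L) /\ (forall i, (Vf i == span_upto v i)%MS).
Proof.
move=> spV.
have new i : exists x, (x \in L) && (x <= Vf i)%MS && ~~ (x <= flag_prev i)%MS.
  have : has (fun x => (x <= Vf i)%MS && ~~ (x <= flag_prev i)%MS) L.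
    apply/negPn/negP => /hasPn noL.
    have : (Vf i <= flag_prev i)%MS.
      apply: submx_trans (spV i) _; apply: ssum_sub => x xL xV.
      by move: (noL x xL); rewrite xV negbK.
    by move/mxrankS; rewrite flagV.1 flag_prev_rank ltnn.
  by case/hasP => x xL xnew; exists x; rewrite xL.
have [v hv] := fin_all_exists new.
exists v; split=> [i|]; first by case/andP: (hv i) => /andP[].
have vV i : (span_upto v i <= Vf i)%MS.
  apply/sumsmx_subP => j ji; rewrite genmxE.
  by case/andP: (hv j) => /andP[_ vjV] _; apply: submx_trans vjV (flagV.2 _ _ ji).
suff Vv k (i : 'I_m.+1) : i = k :> nat -> (Vf i <= span_upto v i)%MS.
  by move=> i; rewrite /eqmx (Vv i) // vV.
elim: k i => [|k IHk] i ik; case/andP: (hv i) => /andP[_ viV] viP;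
  apply: submx_trans (flag_step viV viP) _;
  rewrite addsmx_sub andbC (sumsmx_sup i) ?genmxE //=.
  by case: i ik {viV viP} => [[|j] lt_j] //= _; rewrite /flag_prev sub0mx.
case: i ik {viV viP} => [[|j] lt_j] //= [jk]; rewrite /flag_prev /=.
have lt_jm : (j < m.+1)%N by rewrite ltnW.
have IHj := IHk (inord j); rewrite inordK // in IHj.
by apply: submx_trans (IHj jk) (span_upto_mono _ _); rewrite /= inordK.
Qed.

Definition flag_seq (i : nat) : 'M[F]_m.+1 := Vf (inord (minn i m)).

Lemma flag_seqE (i : 'I_m.+1) : flag_seq i = Vf i.
Proof. by rewrite /flag_seq (minn_idPl _) ?inord_val // -ltnS. Qed.

Lemma flag_seq_chain : chain flag_seq.
Proof.
by move=> i j ij; apply: flagV.2; rewrite !inordK ?ltnS ?geq_minr //; lia.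
Qed.

End Flags.

Section Form.
Variables (F : numFieldType) (N : nat) (M : 'M[F]_N).
Hypothesis skew : skew_form M.
Local Notation b := (bform M).
Implicit Types (S : 'M[F]_N) (u v w x y e f : 'rV[F]_N).

(* Bilinearity: linearity on the left is immediate, on the right it follows
   by skew-symmetry. *)
Lemma bformE u v : b u v = (u *m (M *m v^T)) 0 0.
Proof. by rewrite /bform mulmxA. Qed.

Lemma bformDl u v w : b (u + v) w = b u w + b v w.
Proof. by rewrite !bformE mulmxDl mxE. Qed.

Lemma bformZl a u w : b (a *: u) w = a * b u w.
Proof. by rewrite !bformE -scalemxAl mxE. Qed.

Lemma bformNl u w : b (- u) w = - b u w.
Proof. by rewrite -scaleN1r bformZl mulN1r. Qed.

Lemma bformDr u v w : b w (u + v) = b w u + b w v.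
Proof. by rewrite (skew w) bformDl opprD -!skew. Qed.

Lemma bformZr a u w : b w (a *: u) = a * b w u.
Proof. by rewrite (skew w) bformZl -mulrN -skew. Qed.

Lemma bformNr u w : b w (- u) = - b w u.
Proof. by rewrite (skew w) bformNl -skew. Qed.

(* A skew form is alternating, the characteristic being 0. *)
Lemma bform_alt u : b u u = 0.
Proof.
have : b u u *+ 2 = 0 by rewrite mulr2n {1}skew addNr.
by rewrite -mulr_natr => /eqP; rewrite mulf_eq0 pnatr_eq0 orbF => /eqP.
Qed.

Definition perp1 e : 'M[F]_N := kermx (M *m e^T).
Definition perp e f : 'M[F]_N := (perp1 e :&: perp1 f)%MS.

Lemma perp1P w e : (w <= perp1 e)%MS = (b w e == 0).
Proof.
rewrite sub_kermx bformE; apply/eqP/eqP => [-> | h]; first by rewrite mxE.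
by apply/matrixP => i j; rewrite !ord1 h mxE.
Qed.

Lemma perpP w e f : (w <= perp e f)%MS = (b w e == 0) && (b w f == 0).
Proof. by rewrite sub_capmx !perp1P. Qed.

Lemma proj_perp e f x' y' : b e f = 1 ->
  (forall z, b x' z = b e z) -> (forall z, b y' z = b f z) ->
  forall w, ((w - b w f *: x' + b w e *: y')%R <= perp e f)%MS.
Proof.
move=> ef x'e y'f w; rewrite perpP !bformDl !bformNl !bformZl !x'e !y'f.
by rewrite !bform_alt ef (skew f) ef; apply/andP; split; apply/eqP; ring.
Qed.

Lemma rank_peel S e f : (e <= S)%MS -> (f <= S)%MS -> b e f = 1 ->
  \rank S = (\rank (S :&: perp e f)%MS).+2.
Proof.
move=> eS fS ef; set S' := (S :&: perp e f)%MS.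
have S'e : (S' <= perp1 e)%MS.
  exact: submx_trans (capmxSr _ _) (capmxSl _ _).
have SS' : (S <= (S' + e) + f)%MS.
  apply/row_subP => r; set w := row r S.
  have -> : w = (w - b w f *: e + b w e *: f) + b w f *: e - b w e *: f.
    by apply/rowP => j; rewrite !mxE; ring.
  apply: addmx_sub_adds; first apply: addmx_sub_adds.
  - rewrite sub_capmx proj_perp // andbT -scaleNr.
    by rewrite !addmx_sub ?scalemx_sub ?row_sub.
  - exact/scalemx_sub/submx_refl.
  - by rewrite eqmx_opp scalemx_sub.
have eS' : ~~ (e <= S')%MS.
  apply/negP => /submx_trans/(_ (capmxSr _ _)).
  by rewrite perpP ef oner_eq0 andbF.
have fS'e : ~~ (f <= S' + e)%MS.
  apply/negP => fS'e; have : (f <= perp1 e)%MS.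
    by apply: submx_trans fS'e _; rewrite addsmx_sub S'e perp1P bform_alt eqxx.
  by rewrite perp1P (skew f) ef oppr_eq0 oner_eq0.
have rS_le : (\rank S <= (\rank S').+2)%N.
  apply: leq_trans (mxrankS SS') _.
  have := (mxrank_adds_leqif S' e).1; have := (mxrank_adds_leqif (S' + e)%MS f).1.
  have := rank_leq_row e; have := rank_leq_row f; lia.
have rS_ge : ((\rank S').+2 <= \rank S)%N.
  have S'efS : (S' + e + f <= S)%MS by rewrite !addsmx_sub eS fS capmxSl.
  have := mxrankS S'efS; have := rank_add_notin eS'; have := rank_add_notin fS'e.
  lia.
by apply/eqP; rewrite eqn_leq rS_le rS_ge.
Qed.

Lemma nondeg_peel S e f : nondeg_on M S -> (e <= S)%MS -> (f <= S)%MS ->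
  b e f = 1 -> nondeg_on M (S :&: perp e f)%MS.
Proof.
move=> nd eS fS ef u; rewrite sub_capmx perpP => /andP[uS /andP[/eqP ue /eqP uf]].
move=> uS'; apply: nd => // w wS.
have -> : w = (w - b w f *: e + b w e *: f) + (b w f *: e - b w e *: f).
  by apply/rowP => j; rewrite !mxE; ring.
rewrite bformDr uS' ?bformDr ?bformNr ?bformZr ?ue ?uf ?mulr0 ?oppr0 ?addr0 //.
rewrite sub_capmx proj_perp // andbT -scaleNr.
by rewrite !addmx_sub ?scalemx_sub.
Qed.

End Form.

Lemma bform_delta (F : fieldType) N (M : 'M[F]_N) i j :
  bform M (delta_mx 0 i) (delta_mx 0 j) = M i j.
Proof. by rewrite /bform -rowE trmx_delta -colE !mxE. Qed.

Lemma kernel_vector (F : numFieldType) n (M : 'M[F]_n.*2.+1) : skew_form M ->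
  exists2 k : 'rV_(n.*2.+1), k != 0 & forall w, bform M k w = 0.
Proof.
move=> skM; have [k kn0 kM] : exists2 k : 'rV_(n.*2.+1), k != 0 & k *m M = 0.
  apply/det0P; have MT : M^T = - M.
    by apply/matrixP => i j; rewrite !mxE -!bform_delta skM.
  have : \det M *+ 2 = 0.
    rewrite mulr2n -{1}det_tr MT -scaleN1r detZ -signr_odd /= odd_double /=.
    by rewrite expr1 mulN1r addNr.
  by rewrite -mulr_natr => /eqP; rewrite mulf_eq0 pnatr_eq0 orbF.
by exists k => // w; rewrite /bform kM mul0mx mxE.
Qed.

(* The Gram matrix of a hyperbolic basis e_1, f_1, ..., e_n, f_n (indices
   from 0): index i is paired with its partner, with sign + for e, - for f. *)
Definition partner (i : nat) : nat := if odd i then i.-1 else i.+1.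

Definition std_gram (F : pzRingType) (i k : nat) : F :=
  if k == partner i then (if odd i then -1 else 1) else 0.

Lemma partnerSS i : partner i.+2 = (partner i).+2.
Proof. by rewrite /partner /= negbK; case: i => [|i] //=; case: ifP. Qed.

Lemma std_gramSS (F : pzRingType) i k : std_gram F i.+2 k.+2 = std_gram F i k.
Proof. by rewrite /std_gram partnerSS eqSS /= negbK. Qed.

Lemma partner_lt n i : (i < n.*2)%N -> (partner i < n.*2)%N.
Proof.
rewrite /partner; case: ifP => [_|ev_i lt_i]; first lia.
rewrite ltn_neqAle lt_i andbT; apply: contraFN ev_i => /eqP ii.
by move: (congr1 odd ii); rewrite /= odd_double => /negbFE.
Qed.

Section KernelLine.
Variables (F : numFieldType) (N : nat) (M : 'M[F]_N).
Hypothesis skew : skew_form M.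
Local Notation b := (bform M).
Variable k0 : 'rV[F]_N.
Hypothesis k0_ker : forall w, b k0 w = 0.
Implicit Types (S A : 'M[F]_N) (w x y z e f : 'rV[F]_N).

Lemma bform_k0r w : b w k0 = 0.
Proof. by rewrite skew k0_ker oppr0. Qed.

Lemma line_k0_ker w : (w <= k0)%MS -> forall z, b w z = 0.
Proof. by case/sub_rVP => a -> z; rewrite bformZl k0_ker mulr0. Qed.

Lemma bform_shiftr z w t : b z (w + t *: k0) = b z w.
Proof. by rewrite bformDr // bformZr // bform_k0r mulr0 addr0. Qed.

Definition shifted e x : Prop := x = e \/ x = e + k0.

Lemma shifted_bform e x : shifted e x -> forall z, b x z = b e z.
Proof. by case=> -> z; rewrite ?bformDl ?k0_ker ?addr0. Qed.

Lemma shifted_sub S e x : (e <= S)%MS -> shifted e x -> (x <= S + k0)%MS.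
Proof.
move=> eS [->|->]; first exact: submx_trans eS (addsmxSl _ _).
exact/addmx_sub_adds/submx_refl.
Qed.

Lemma perp_shift e f w t :
  ((w + t *: k0)%R <= perp M e f)%MS = (w <= perp M e f)%MS.
Proof. by rewrite !perpP !bformDl !bformZl !k0_ker !mulr0 !addr0. Qed.

Definition contains_or_orth (C : 'M[F]_N) x f : Prop :=
  (x <= C)%MS \/ forall w, (w <= C)%MS -> b w f = 0.

Lemma normalize_pair S e0 f0 t s : (e0 <= S)%MS -> (f0 <= S)%MS ->
  b e0 f0 != 0 ->
  exists e f x' y', [/\ (e <= S)%MS && (f <= S)%MS, b e f = 1,
    shifted e x' /\ shifted f y', (x' <= (e0 + t *: k0)%R)%MS
    & (y' <= (e0 + t *: k0)%R + (f0 + s *: k0)%R)%MS].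
Proof.
move=> e0S f0S; set w0 := b e0 f0 => w0n.
set x := (e0 + t *: k0)%R; set y := (f0 + s *: k0)%R.
have xx c : (c *: x <= x)%MS by apply/scalemx_sub/submx_refl.
have xy c1 c2 : ((c1 *: x + c2 *: y)%R <= x + y)%MS.
  by apply: addmx_sub_adds; apply/scalemx_sub/submx_refl.
have [t0|tn0] := eqVneq t 0.
  have [s0|sn0] := eqVneq s 0.
    exists (w0^-1 *: e0), f0, (w0^-1 *: x), y; split.
    - by rewrite scalemx_sub.
    - by rewrite bformZl mulVf.
    - by split; left; rewrite /x /y ?t0 ?s0 scale0r addr0.
    - exact: xx.
    - exact: addsmxSr.
  exists ((s / w0) *: e0), (s^-1 *: f0), ((s / w0) *: x), (s^-1 *: y); split.
  - by rewrite !scalemx_sub.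
  - by rewrite bformZl bformZr // -/w0; field; apply/andP.
  - split; first by left; rewrite /x t0 scale0r addr0.
    by right; apply/rowP => j; rewrite !mxE; field.
  - exact: xx.
  - by apply: scalemx_sub; apply: addsmxSr.
set e := t^-1 *: e0; set y1 := (f0 - s *: e)%R.
have bey1 : b e y1 = t^-1 * w0.
  rewrite /y1 bformDr // bformNr // !bformZr // !bformZl bform_alt //.
  by rewrite /w0; ring.
have bey1n : b e y1 != 0 by rewrite bey1 mulf_neq0 ?invr_eq0.
exists e, ((b e y1)^-1 *: y1), (t^-1 *: x), ((b e y1)^-1 *: y1); split.
- by rewrite !scalemx_sub // addmx_sub // eqmx_opp !scalemx_sub.
- by rewrite bformZr // mulVf.
- split; last by left.
  by right; rewrite /e /x; apply/rowP => j; rewrite !mxE; field.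
- exact: xx.
- have y1E : y1 = (- s * t^-1) *: x + y.
    by rewrite /y1 /e /x /y; apply/rowP => j; rewrite !mxE; field.
  by rewrite y1E scalerDr scalerA; apply: xy.
Qed.

Lemma pick_pair S (C : nat -> 'M[F]_N) : nondeg_on M S -> \rank S != 0%N ->
  (forall i, (C i <= S + k0)%MS) -> chain C -> (exists i0, (S <= C i0)%MS) ->
  exists e f x' y', [/\ (e <= S)%MS && (f <= S)%MS, b e f = 1,
    shifted e x' /\ shifted f y' &
    forall i, contains_or_orth (C i) x' f /\ contains_or_orth (C i) y' e].
Proof.
move=> nd rS CS chC [i0 SC].
have Sk0 : ~~ (S <= k0)%MS.
  apply: contra rS => Sk0; rewrite mxrank_eq0; apply/eqP/row_matrixP => r.
  rewrite row0; apply: nd (row_sub r S) _ => w _.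
  exact: line_k0_ker (submx_trans (row_sub r S) Sk0) w.
have [a [x [xk0 x_up x_down]]] := chain_escape chC (X := k0)
  (ex_intro _ i0 (contra (submx_trans SC) Sk0)).
have [e0 [t [e0S xE]]] :=
  sub_adds_line (submx_trans (x_up a (leqnn a)) (CS a)).
have bx z : b z x = b z e0 by rewrite xE bform_shiftr.
have Sx : ~~ (S <= perp1 M x)%MS.
  apply: contra xk0 => Sx; rewrite xE (nd e0 e0S) ?add0r ?scalemx_sub //.
  move=> w wS; move: (submx_trans wS Sx); rewrite perp1P bx => /eqP we0.
  by rewrite skew we0 oppr0.
have [bb [y [yx y_up y_down]]] := chain_escape chC (X := perp1 M x)
  (ex_intro _ i0 (contra (submx_trans SC) Sx)).
have [f0 [s [f0S yE]]] :=
  sub_adds_line (submx_trans (y_up bb (leqnn bb)) (CS bb)).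
have e0f0 : b e0 f0 != 0.
  move: yx; rewrite perp1P bx yE bformDl bformZl k0_ker mulr0 addr0.
  by rewrite skew oppr_eq0.
have [e [f [x' [y' [eSfS ef [ex' fy'] x'x y'xy]]]]] :=
  normalize_pair t s e0S f0S e0f0.
rewrite -xE -yE in x'x y'xy.
exists e, f, x', y'; split=> // i; split.
  have [ai|ia] := leqP a i; first by left; exact: submx_trans x'x (x_up i ai).
  by right => w wC; apply: line_k0_ker (submx_trans wC (x_down i ia)) f.
have [bi|ib] := leqP bb i.
  left; apply: submx_trans y'xy _; rewrite addsmx_sub y_up // andbT x_up //.
  rewrite leqNgt; apply/negP => /x_down Cik0; move: yx.
  by rewrite (submx_trans (y_up i bi) (submx_trans Cik0 _)) // perp1P k0_ker.
right => w wC; have := submx_trans wC (y_down i ib); rewrite perp1P => /eqP wx.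
case/sub_rVP: x'x => g x'E.
by rewrite skew -(shifted_bform ex') x'E bformZl skew wx oppr0 mulr0 oppr0.
Qed.

Lemma span_step S e f x' y' (C : 'M[F]_N) : (e <= S)%MS -> (f <= S)%MS ->
  b e f = 1 -> shifted e x' -> shifted f y' -> (C <= S + k0)%MS ->
  contains_or_orth C x' f -> contains_or_orth C y' e ->
  (C <= (C :&: ((S :&: perp M e f) + k0)) + ssum [:: x'; y'] C)%MS.
Proof.
move=> eS fS ef ex' fy' CS Cx' Cy'; apply/row_subP => r; set w := row r C.
have wC : (w <= C)%MS := row_sub r C.
have cx : (b w f *: x' <= C :&: ssum [:: x'; y'] C)%MS.
  apply: scale_ssum; first by rewrite mem_head.
  by case: Cx' => [|Cf]; [right | left; apply: Cf].
have dy : (b w e *: y' <= C :&: ssum [:: x'; y'] C)%MS.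
  apply: scale_ssum; first by rewrite !inE eqxx orbT.
  by case: Cy' => [|Ce]; [right | left; apply: Ce].
set p := (w - b w f *: x' + b w e *: y')%R.
have pC : (p <= C)%MS.
  rewrite !addmx_sub // ?eqmx_opp; last exact: submx_trans dy (capmxSl _ _).
  exact: submx_trans cx (capmxSl _ _).
have pSk : (p <= S + k0)%MS.
  have x'Sk := shifted_sub eS ex'; have y'Sk := shifted_sub fS fy'.
  by rewrite !addmx_sub ?eqmx_opp ?scalemx_sub //; apply: submx_trans wC CS.
have pP : (p <= perp M e f)%MS.
  exact: (proj_perp skew ef (shifted_bform ex') (shifted_bform fy') w).
have -> : w = (p + (b w f *: x' - b w e *: y'))%R.
  by rewrite /p; apply/rowP => j; rewrite !mxE; ring.
apply: addmx_sub_adds.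
  have [s0 [t [s0S pE]]] := sub_adds_line pSk.
  move: pP; rewrite sub_capmx pC pE perp_shift => s0P.
  apply: addmx_sub_adds; first by rewrite sub_capmx s0S.
  exact/scalemx_sub/submx_refl.
apply: addmx_sub; first exact: submx_trans cx (capmxSr _ _).
by rewrite eqmx_opp; apply: submx_trans dy (capmxSr _ _).
Qed.

(* A list of pairs (e_1, f_1), ..., (e_m, f_m), its vectors
   e_1, f_1, ..., e_m, f_m (then k0), and the candidate set
   B = {k0} u {e_j, f_j} u {e_j + k0, f_j + k0}. *)
Definition pairs_seq (E : seq ('rV[F]_N * 'rV[F]_N)) : seq 'rV[F]_N :=
  flatten [seq [:: p.1; p.2] | p <- E].

Definition pair_vec E (i : nat) : 'rV[F]_N := nth k0 (pairs_seq E) i.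

Definition Bset E : seq 'rV[F]_N :=
  k0 :: pairs_seq E ++ [seq x + k0 | x <- pairs_seq E].

Fixpoint hyp_pairs E : Prop :=
  if E is p :: E' then
    [/\ b p.1 p.2 = 1, {in pairs_seq E', forall x, b p.1 x = 0 /\ b p.2 x = 0}
      & hyp_pairs E']
  else True.

Lemma size_pairs_seq E : size (pairs_seq E) = (size E).*2.
Proof. by elim: E => //= p E IHE; rewrite IHE doubleS. Qed.

Lemma Bset_cons p E : {subset Bset E <= Bset (p :: E)}.
Proof.
move=> x; rewrite /Bset /= !(inE, mem_cat) /=.
by case/orP=> [->|/orP[]->]; rewrite ?orbT.
Qed.

Lemma Bset_head p E x : shifted p.1 x \/ shifted p.2 x -> x \in Bset (p :: E).
Proof.
by rewrite /Bset /= !(inE, mem_cat) /=; case=> [[]|[]] ->; rewrite eqxx ?orbT.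
Qed.

(* With S = 0 the chain members lie in <k0>, hence are 0 or <k0>. *)
Lemma spanned_line A : (A <= k0)%MS -> spanned (Bset [::]) A.
Proof.
move=> Ak0; have [->|An0] := eqVneq A 0; first exact: sub0mx.
have k0A : (k0 <= A)%MS.
  apply: sub_rank_eq (Ak0) _.
  by rewrite (leq_trans (rank_leq_row _)) // lt0n mxrank_eq0.
exact: submx_trans Ak0 (ssum_sup (mem_head _ _) k0A).
Qed.

Definition adapted_basis S (C : nat -> 'M[F]_N) E : Prop :=
  [/\ {in pairs_seq E, forall x, (x <= S)%MS}, hyp_pairs E,
      \rank S = (size E).*2 & forall i, spanned (Bset E) (C i)].

Lemma adapted_nil S (C : nat -> 'M[F]_N) : \rank S = 0%N ->
  (forall i, (C i <= S + k0)%MS) -> adapted_basis S C [::].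
Proof.
move=> r0 CS; split=> // i; apply: spanned_line.
by move/eqP: r0 (CS i); rewrite mxrank_eq0 => /eqP->; rewrite adds0mx.
Qed.

Lemma adapted_pairs d S (C : nat -> 'M[F]_N) :
  (\rank S <= d)%N -> nondeg_on M S -> (forall i, (C i <= S + k0)%MS) ->
  chain C -> (exists i0, (S <= C i0)%MS) -> exists E, adapted_basis S C E.
Proof.
elim: d S C => [|d IHd] S C rS nd CS chC SC;
  have [r0|rn0] := eqVneq (\rank S) 0%N; try by exists [::]; apply: adapted_nil.
  by move: rS; rewrite leqn0 (negbTE rn0).
have [e [f [x' [y' [/andP[eS fS] ef [ex' fy'] Cxy]]]]] :=
  pick_pair nd rn0 CS chC SC.
set S' := (S :&: perp M e f)%MS; set C' := fun i => (C i :&: (S' + k0))%MS.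
have rSS' := rank_peel skew eS fS ef.
have rS' : (\rank S' <= d)%N by move: rS; rewrite rSS' -/S'; lia.
have ndS' := nondeg_peel skew nd eS fS ef.
have chC' : chain C' by move=> i j ij; apply/capmxS/submx_refl/chC.
have SC' : exists i0, (S' <= C' i0)%MS.
  have [i0 SCi0] := SC; exists i0.
  by rewrite sub_capmx addsmxSl (submx_trans (capmxSl _ _) SCi0).
have [E [ES' hypE rE spE]] :=
  IHd S' C' rS' ndS' (fun i => capmxSr _ _) chC' SC'.
exists ((e, f) :: E); split=> /=.
- move=> x; rewrite !inE => /orP[/eqP-> //|/orP[/eqP-> //|/ES' xS']].
  exact: submx_trans xS' (capmxSl _ _).
- split=> // x /ES' /submx_trans/(_ (capmxSr _ _)).
  by rewrite perpP (skew e) (skew f) => /andP[/eqP-> /eqP->]; rewrite oppr0.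
- by rewrite rSS' rE doubleS.
move=> i; have [Cx' Cy'] := Cxy i.
apply: submx_trans (span_step eS fS ef ex' fy' (CS i) Cx' Cy') _.
have C'C : (C' i <= C i)%MS by apply: capmxSl.
rewrite addsmx_sub (submx_trans (spE i) (ssum_mono (@Bset_cons (e, f) E) C'C)).
apply: ssum_mono (submx_refl _) => z; rewrite !inE => /orP[]/eqP->.
  by apply: Bset_head; left.
by apply: Bset_head; right.
Qed.

Lemma kernel_complement S : nondeg_on M S -> \rank S = N.-1 -> k0 != 0 ->
  row_full (S + k0).
Proof.
move=> nd rS k0n; have k0S : ~~ (k0 <= S)%MS.
  by apply: contra k0n => k0S; apply/eqP/(nd _ k0S) => w _.
by rewrite /row_full eqn_leq rank_leq_col; have := rank_add_notin k0S; lia.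
Qed.

Lemma form_kerE S : nondeg_on M S -> row_full (S + k0) ->
  forall v, form_ker M v <-> (v <= k0)%MS.
Proof.
move=> nd full v; split=> [vker|/line_k0_ker //].
have [s [t [sS vE]]] := sub_adds_line (submx_full v full).
have s0 : s = 0.
  apply: nd => // w _; move: (vker w).
  by rewrite vE bformDl bformZl k0_ker mulr0 addr0.
by rewrite vE s0 add0r scalemx_sub.
Qed.

Lemma gram E : hyp_pairs E -> forall i k, (i < (size E).*2)%N ->
  (k < (size E).*2)%N -> b (pair_vec E i) (pair_vec E k) = std_gram F i k.
Proof.
elim: E => [|p E IHE] //= [pef pE hypE] i k; rewrite doubleS.
have pEk j : (j < (size E).*2)%N ->
    b p.1 (pair_vec E j) = 0 /\ b p.2 (pair_vec E j) = 0.
  by move=> jlt; apply: pE; rewrite mem_nth // size_pairs_seq.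
case: i => [|[|i]]; case: k => [|[|k]]; rewrite /pair_vec /= ?ltnS => ilt klt;
  rewrite ?std_gramSS -?/(pair_vec E _) ?bform_alt // /std_gram ?partnerSS //=.
- by rewrite (pEk k klt).1.
- by rewrite skew pef.
- by rewrite (pEk k klt).2.
- by rewrite skew (pEk i ilt).1 oppr0.
- by rewrite skew (pEk i ilt).2 oppr0.
- exact: IHE.
Qed.

End KernelLine.

Section PairsBasis.
Variables (F : numFieldType) (n : nat) (M : 'M[F]_n.*2.+1).
Hypothesis skew : skew_form M.
Variable k0 : 'rV[F]_n.*2.+1.
Hypothesis k0_ker : forall w, bform M k0 w = 0.
Variable E : seq ('rV[F]_n.*2.+1 * 'rV[F]_n.*2.+1).
Hypothesis sizeE : size E = n.
Local Notation e := (fun i : 'I_n.*2.+1 => pair_vec k0 E i).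

Lemma pair_vec_out k : (n.*2 <= k)%N -> pair_vec k0 E k = k0.
Proof. by move=> kge; rewrite /pair_vec nth_default // size_pairs_seq sizeE. Qed.

Lemma e_max : e ord_max = k0.
Proof. exact: pair_vec_out. Qed.

Lemma Bset_vec x : x \in Bset k0 E ->
  (exists k, x = e k) \/ (exists2 k, k != ord_max & x = e k + e ord_max).
Proof.
have vec y : y \in pairs_seq E ->
    exists2 k : 'I_n.*2.+1, k != ord_max & y = e k.
  case/(nthP k0); rewrite size_pairs_seq sizeE => k klt <-.
  by exists (Ordinal (leqW klt)); rewrite // -val_eqE /= neq_ltn klt.
rewrite e_max !inE mem_cat.
case/orP=> [/eqP->|/orP[/vec[k _ ->]|/mapP[y /vec[k kmax ->] ->]]].
- by left; exists ord_max; rewrite e_max.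
- by left; exists k.
- by right; exists k.
Qed.

Lemma Bset_in_span : {in Bset k0 E, forall x, (x <= \matrix_i e i)%MS}.
Proof.
have ek j : (e j <= \matrix_i e i)%MS by apply: (eq_row_sub j); rewrite rowK.
by move=> x /Bset_vec[[k ->]|[k _ ->]]; rewrite ?addmx_sub.
Qed.

Lemma hyperbolic_pairs : hyp_pairs M E -> hyperbolic M e.
Proof.
move=> hypE i /=; have [ilt|ige] := ltnP i n.*2; last first.
  by left => w; rewrite pair_vec_out.
have plt := partner_lt ilt; right; exists (Ordinal (leqW plt)).
have gramE k : (k < n.*2)%N ->
    bform M (pair_vec k0 E i) (pair_vec k0 E k) = std_gram F i k.
  by move=> klt; apply: gram; rewrite ?sizeE.
rewrite gramE // /std_gram eqxx; split; last by case: ifP; [right|left].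
move=> k; have [klt|kge] := ltnP k n.*2.
  rewrite gramE // /std_gram; case: ifP => [/eqP kp|kp].
    split=> _; first exact: val_inj.
    by case: ifP; rewrite ?oppr_eq0 oner_eq0.
  by rewrite eqxx; split=> // kE; rewrite kE eqxx in kp.
rewrite (pair_vec_out kge) bform_k0r // eqxx.
by split=> // /(congr1 val) /= kp; move: plt; rewrite -kp ltnNge kge.
Qed.

End PairsBasis.

Theorem lemma3 (F : numClosedFieldType) (n : nat)
    (U : 'M[F]_(n.*2.+1)) (Vf : 'I_(n.*2.+1) -> 'M[F]_(n.*2.+1))
    (M : 'M[F]_(n.*2.+1)) :
  hyperplane U -> full_flag Vf -> skew_form M -> nondeg_on M U ->
  exists e : 'I_(n.*2.+1) -> 'rV[F]_(n.*2.+1),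
    [/\ is_basis e,
        (forall k : 'I_(n.*2.+1), k != ord_max -> (e k <= U)%MS),
        (forall v : 'rV[F]_(n.*2.+1), form_ker M v <-> (v <= e ord_max)%MS),
        hyperbolic M e &
        exists v : 'I_(n.*2.+1) -> 'rV[F]_(n.*2.+1),
          (forall i : 'I_(n.*2.+1),
             (exists k : 'I_(n.*2.+1), v i = e k) \/
             (exists2 k : 'I_(n.*2.+1), k != ord_max & v i = e k + e ord_max)) /\
          (forall i : 'I_(n.*2.+1), (Vf i == span_upto v i)%MS)].
Proof.
move=> rU flagV skew nd.
have [k0 k0n k0_ker] := kernel_vector skew.
have full := kernel_complement k0_ker nd rU k0n.
have UC : exists i0, (U <= flag_seq Vf i0)%MS.
  by exists n.*2; rewrite (flag_seqE Vf ord_max) submx_full // /row_full flagV.1.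
have [E [EU hypE rE spC]] := adapted_pairs skew k0_ker (leqnn _) nd
  (fun i => submx_full _ full) (flag_seq_chain flagV) UC.
have sizeE : size E = n by apply: double_inj; rewrite -rE rU.
have spV i : spanned (Bset k0 E) (Vf i) by rewrite -(flag_seqE Vf).
have [v [vB vV]] := flag_from_spanned flagV spV.
exists (fun i => pair_vec k0 E i); split.
- exact: basis_of_spanning (Bset_in_span sizeE) (spV ord_max) (flagV.1 ord_max).
- move=> k kmax; apply/EU/mem_nth; rewrite size_pairs_seq sizeE.
  by rewrite ltn_neqAle -ltnS ltn_ord andbT; move: kmax; rewrite -val_eqE.
- by rewrite (e_max k0 sizeE); exact: (form_kerE k0_ker nd full).
- exact: (hyperbolic_pairs skew k0_ker sizeE hypE).
- by exists v; split=> // i; apply/(Bset_vec sizeE)/vB.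
Qed.
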